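(* Let $I\subseteq\mathbb{R}_+\setminus\{0\}$ be a nonempty, non-singleton interval and let $n\in\mathbb{N}$ with $n\geq 2$. Suppose $\Phi: I\to\mathbb{R}$ satisfies $$\Phi(x)+\frac{(x+y)^n-x^n}{y^n}\Phi(y)=\Phi(y)+\frac{(x+y)^n-y^n}{x^n}\Phi(x)\qquad\text{for all } x,y\in I.$$ Then there exists $c\in\mathbb{R}$ such that $\Phi(x)=cx^n$ for all $x\in I$.
   Context: $\mathbb{R}_+$ denotes the set of nonnegative real numbers. *)

From Stdlib Require Import Reals.
Open Scope R_scope.

Definition is_interval (I : R -> Prop) : Prop :=
  forall x y z, I x -> I z -> x <= y <= z -> I y.

(* Clearing denominators, the equation at (x, y) becomes
   (y^n Phi x - x^n Phi y) ((x + y)^n - x^n - y^n) = 0, and the second factor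
   is positive for n >= 2.  Hence Phi x / x^n is the same for all x in I; only
   positivity of the points of I is needed, not that I is an interval. *)

From Stdlib Require Import Reals Lra Psatz.
Open Scope R_scope.

Lemma pow_add_gt (x y : R) (n : nat) : 0 < x -> 0 < y -> (2 <= n)%nat ->
  x ^ n + y ^ n < (x + y) ^ n.
Proof.
  intros hx hy hn.
  induction hn as [|n hn IH]; [simpl; nra|].
  assert (0 < x ^ n) by (apply pow_lt; lra).
  assert (0 < y ^ n) by (apply pow_lt; lra).
  simpl; nra.
Qed.

Lemma cross_relation_proportional (p q X Y S : R) :
  X <> 0 -> Y <> 0 -> S - X - Y <> 0 ->
  p + (S - X) / Y * q = q + (S - Y) / X * p -> p * Y = q * X.
Proof.
  intros hX hY hD H.
  assert (hXY : / (X * Y) <> 0)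
    by (apply Rinv_neq_0_compat, Rmult_integral_contrapositive; tauto).
  assert (Hcleared : (p * Y - q * X) * (S - X - Y) = 0).
  { apply (Rmult_eq_reg_r (/ (X * Y))); [|exact hXY].
    rewrite Rmult_0_l.
    replace ((p * Y - q * X) * (S - X - Y) * / (X * Y))
      with ((q + (S - Y) / X * p) - (p + (S - X) / Y * q)) by (field; tauto).
    lra. }
  apply Rmult_integral in Hcleared; destruct Hcleared; [lra|contradiction].
Qed.

Theorem proposition2p6 (I : R -> Prop) (n : nat) (Phi : R -> R)
  (HI : is_interval I)
  (Hpos : forall x, I x -> 0 < x)
  (Hnontriv : exists a b, I a /\ I b /\ a <> b)
  (Hn : (2 <= n)%nat)
  (Hfe : forall x y, I x -> I y ->
     Phi x + ((x + y) ^ n - x ^ n) / y ^ n * Phi y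
     = Phi y + ((x + y) ^ n - y ^ n) / x ^ n * Phi x) :
  exists c : R, forall x, I x -> Phi x = c * x ^ n.
Proof.
  destruct Hnontriv as [a [_ [Ha _]]].
  exists (Phi a / a ^ n).
  intros x Hx.
  pose proof (Hpos a Ha) as pa; pose proof (Hpos x Hx) as px.
  assert (hxn : 0 < x ^ n) by (apply pow_lt; lra).
  assert (han : 0 < a ^ n) by (apply pow_lt; lra).
  assert (Hprop : Phi x * a ^ n = Phi a * x ^ n).
  { apply (cross_relation_proportional _ _ _ _ ((x + a) ^ n)); try lra.
    - pose proof (pow_add_gt x a n px pa Hn); lra.
    - apply Hfe; assumption. }
  apply (Rmult_eq_reg_r (a ^ n)); [|lra].
  rewrite Hprop; field; lra.
Qed.
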